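(* Let $k$ be a real number that is not an integer, and for $j\ge1$ let $\nu_j=\frac{d^{j-1}}{dk^{j-1}}\big(\pi\cot(k\pi)\big)$. Then for $n\in\mathbb{N}_0$, $$B_n(\nu_1,\nu_2,\dots,\nu_n)=\begin{cases}(-1)^j\pi^{2j}, & n=2j,\ j\in\mathbb{N}_0,\\ (-1)^j\pi^{2j+1}\cot(k\pi), & n=2j+1,\ j\in\mathbb{N}_0.\end{cases}$$
   Context: $B_n(s_1,\dots,s_n)$ denotes the complete Bell polynomial, defined by $\exp\big(\sum_{j\ge1}s_j t^j/j!\big)=\sum_{n\ge0}B_n(s_1,\dots,s_n)t^n/n!$; $B_0=1$. *)

From Stdlib Require Import Reals.
From Coquelicot Require Import Coquelicot.
Open Scope R_scope.

(* Formal power series over R represented by coefficient sequences nat -> R. *)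
Definition ps_mul (a b : nat -> R) : nat -> R :=
  fun n => sum_f_R0 (fun i => a i * b (n - i)%nat) n.

Fixpoint ps_pow (a : nat -> R) (m : nat) : nat -> R :=
  match m with
  | O => fun n => if Nat.eqb n 0 then 1 else 0
  | S m' => ps_mul a (ps_pow a m')
  end.

Definition bell_arg (s : nat -> R) : nat -> R :=
  fun j => match j with O => 0 | _ => s j / INR (Stdlib.Arith.Factorial.fact j) end.

(* Complete Bell polynomial B_n(s_1,...,s_n), defined by
   exp(sum_{j>=1} s_j t^j/j!) = sum_n B_n t^n/n!.
   Since the inner series has no constant term, the coefficient of t^n in
   exp(A) = sum_m A^m/m! only receives contributions from m <= n.
   Only s_1,...,s_n are used (s 0 is ignored). *)
Definition bell (n : nat) (s : nat -> R) : R :=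
  INR (Stdlib.Arith.Factorial.fact n) * sum_f_R0 (fun m => ps_pow (bell_arg s) m n / INR (Stdlib.Arith.Factorial.fact m)) n.

Definition pcot (x : R) : R := PI * (cos (x * PI) / sin (x * PI)).

(* With [g x = sin (PI x)] we have [g' = pcot * g], so the Leibniz rule gives
   [g^(n+1) = sum_i C(n,i) pcot^(i) g^(n-i)].  Differentiating
   [exp (sum_j s_j t^j / j!)] in [t] shows that the complete Bell polynomials
   obey the same recursion [B_(n+1) = sum_i C(n,i) s_(i+1) B_(n-i)], hence
   [B_n(nu) = g^(n)(k) / g(k) = PI^n sin (PI k + n PI / 2) / sin (PI k)]. *)

From Stdlib Require Import Reals Lra Lia.
From Coquelicot Require Import Coquelicot.
From mathcomp Require Import all_boot all_algebra.
From mathcomp Require Import Rstruct zify.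
From mathcomp Require ring.
Import GRing.Theory Num.Theory.
Open Scope R_scope.

Section FormalExp.
Import ring.
Local Open Scope ring_scope.

Lemma sum_f_R0_big (f : nat -> R) n : sum_f_R0 f n = \sum_(i < n.+1) f i.
Proof.
elim: n => [|n IH] /=; first by rewrite big_ord_recr big_ord0 /= add0r.
by rewrite big_ord_recr /= IH.
Qed.

Lemma fact_factorial n : Factorial.fact n = n`!.
Proof. by elim: n => [|n IH] //=; rewrite IH factS. Qed.

Lemma natr_fact_neq0 n : (n`!%:R : R) != 0.
Proof. by rewrite pnatr_eq0 -lt0n fact_gt0. Qed.

Variable a : nat -> R.

Lemma ps_pow_coefE N m i :
  (i < N)%N -> ps_pow a m i = ((\poly_(j < N) a j) ^+ m)`_i.
Proof.
elim: m i => [|m IH] i Hi; first by rewrite expr0 coef1 /=; case: i Hi.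
rewrite exprS coefM /= /ps_mul sum_f_R0_big; apply: eq_bigr => j _.
rewrite coef_poly IH; last exact: leq_ltn_trans (leq_subr _ _) Hi.
by rewrite (leq_ltn_trans _ Hi) // -ltnS.
Qed.

(* The coefficient of [t^n] in the identity [(A^(m+1))' = (m+1) A^m A']. *)
Lemma ps_pow_succ_coef_deriv m n :
  n.+1%:R * ps_pow a m.+1 n.+1 =
  m.+1%:R * \sum_(i < n.+1) i.+1%:R * a i.+1 * ps_pow a m (n - i).
Proof.
set P := \poly_(j < n.+2) a j.
have /(congr1 (fun p : {poly R} => p`_n)) := deriv_exp P m.+1.
rewrite coef_deriv coefMn coefM -!ps_pow_coefE // mulr_natl => ->.
rewrite mulr_natl; congr (_ *+ _); apply: eq_bigr => -[i Hi] _ /=.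
rewrite coef_deriv coef_poly ltnS Hi -ps_pow_coefE ?mulr_natl //.
by rewrite ltnS -ltnS (leq_ltn_trans (leq_subr _ _)).
Qed.

Hypothesis a0 : a 0 = 0.

Lemma ps_pow_small m i : (i < m)%N -> ps_pow a m i = 0.
Proof.
elim: m i => [|m IH] i Hi //.
rewrite /= /ps_mul sum_f_R0_big big1 // => -[[|j] Hj] _ /=.
  by rewrite a0 Rmult_0_l.
by rewrite IH ?Rmult_0_r //; lia.
Qed.

Definition exp_ps_coef n := \sum_(m < n.+1) ps_pow a m n / m`!%:R.

Lemma exp_ps_coef_widen N n :
  (n <= N)%N -> exp_ps_coef n = \sum_(m < N.+1) ps_pow a m n / m`!%:R.
Proof.
move=> le_nN; rewrite /exp_ps_coef (big_ord_widen N.+1 (fun m => ps_pow a m n / m`!%:R)) //.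
rewrite big_mkcond /=; apply: eq_bigr => m _.
by case: ifP => // /negbT; rewrite -leqNgt => lt_nm; rewrite ps_pow_small ?mul0r.
Qed.

(* The coefficient of [t^n] in the identity [exp(A)' = A' exp(A)]. *)
Lemma exp_ps_coef_succ n :
  n.+1%:R * exp_ps_coef n.+1 =
  \sum_(i < n.+1) i.+1%:R * a i.+1 * exp_ps_coef (n - i).
Proof.
under [RHS]eq_bigr => i _ do rewrite (exp_ps_coef_widen n) ?leq_subr // mulr_sumr.
rewrite /exp_ps_coef big_ord_recl /= mul0r add0r mulr_sumr.
rewrite [RHS]exchange_big /=; apply: eq_bigr => m _.
rewrite add0n -[ps_mul _ _]/(ps_pow a m.+1) /bump leq0n add1n.
rewrite mulrA ps_pow_succ_coef_deriv factS natrM.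
under [RHS]eq_bigr => i _ do rewrite mulrA.
rewrite -mulr_suml; field.
by rewrite natr_fact_neq0 nat1r pnatr_eq0.
Qed.

End FormalExp.

Section BellRecurrence.
Import ring.

Variable s : nat -> R.

Lemma bellE n : bell n s = (n`!%:R * exp_ps_coef (bell_arg s) n)%R.
Proof.
rewrite /bell sum_f_R0_big INRE fact_factorial; congr (_ * _).
by apply: eq_bigr => i _; rewrite RdivE INRE fact_factorial.
Qed.

Lemma bell_arg_succ i : (i.+1%:R * bell_arg s i.+1 = s i.+1 / i`!%:R)%R.
Proof.
rewrite /bell_arg RdivE INRE fact_factorial factS natrM.
by field; rewrite natr_fact_neq0 nat1r pnatr_eq0.
Qed.

Lemma bell_rec n :
  bell n.+1 s = sum_f_R0 (fun i => INR 'C(n, i) * s i.+1 * bell (n - i) s) n.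
Proof.
rewrite bellE factS natrM -mulrA mulrCA exp_ps_coef_succ // sum_f_R0_big mulr_sumr.
apply: eq_bigr => -[i /= le_in] _; rewrite ltnS in le_in.
rewrite !RmultE mulrA bell_arg_succ bellE INRE -(bin_fact le_in) !natrM.
by field; rewrite !natr_fact_neq0.
Qed.

End BellRecurrence.

Lemma sum_binomial_succ (F : nat -> nat -> R) n :
  sum_f_R0 (fun i => INR 'C(n.+1, i) * F i (n.+1 - i)%N) n.+1 =
  sum_f_R0 (fun i => INR 'C(n, i) * (F i.+1 (n - i)%N + F i (n.+1 - i)%N)) n.
Proof.
rewrite !sum_f_R0_big big_ord_recl bin0 subn0.
under eq_bigr => i _ do rewrite /= RmultE INRE binS subSS natrD mulrDl.
under [RHS]eq_bigr => i _ do rewrite RmultE RplusE INRE mulrDr.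
rewrite !big_split [X in (_ + X)%R]addrC addrCA; congr (_ + _)%R.
rewrite [RHS]big_ord_recl bin0 subn0 RmultE INRE; congr (_ + _)%R.
rewrite big_ord_recr /= bin_small // mul0r addr0.
by apply: eq_bigr => i _; rewrite subSS.
Qed.

Lemma is_derive_sum_f_R0 (G : nat -> R -> R) (dG : nat -> R) n x :
  (forall i, (i <= n)%N -> is_derive (G i) x (dG i)) ->
  is_derive (fun y => sum_f_R0 (fun i => G i y) n) x (sum_f_R0 dG n).
Proof.
elim: n => [|n IH] DG /=; first exact: DG.
apply: (is_derive_plus (fun y => sum_f_R0 (fun i => G i y) n)); last exact: DG.
by apply: IH => i le_in; apply: DG; apply: leqW.
Qed.

Section LogarithmicDerivative.

Variables (D : R -> Prop) (f g : R -> R).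
Hypothesis D_open : forall x, D x -> locally x D.
Hypothesis f_smooth : forall i x, D x -> is_derive (Derive_n f i) x (Derive_n f i.+1 x).
Hypothesis g_smooth : forall i x, D x -> is_derive (Derive_n g i) x (Derive_n g i.+1 x).

Lemma Derive_n_mult n x : D x ->
  Derive_n (fun y => f y * g y) n x =
  sum_f_R0 (fun i => INR 'C(n, i) * (Derive_n f i x * Derive_n g (n - i) x)) n.
Proof.
elim: n x => [|n IH] x Dx; first by rewrite /=; ring.
rewrite /= (Derive_ext_loc _ (fun y => sum_f_R0 (fun i =>
    INR 'C(n, i) * (Derive_n f i y * Derive_n g (n - i) y)) n)); last first.
  move: (D_open _ Dx); apply: filter_imp; exact: IH.
apply: is_derive_unique.
have /= -> := sum_binomial_succ (fun i j => Derive_n f i x * Derive_n g j x) n.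
apply: is_derive_sum_f_R0 => i le_in.
apply: is_derive_scal; apply: is_derive_mult; [exact: f_smooth|rewrite subSn //; exact: g_smooth|].
by move=> *; apply: Rmult_comm.
Qed.

Hypothesis g_log_derive : forall x, D x -> is_derive g x (f x * g x).

Lemma Derive_n_succ_log_derive n x : D x ->
  Derive_n g n.+1 x =
  sum_f_R0 (fun i => INR 'C(n, i) * (Derive_n f i x * Derive_n g (n - i) x)) n.
Proof.
move=> Dx; rewrite -Derive_n_mult // -[n.+1]Nat.add_1_r -Derive_n_comp.
apply: Derive_n_ext_loc; move: (D_open _ Dx); apply: filter_imp => y Dy.
exact: is_derive_unique (g_log_derive _ Dy).
Qed.

Lemma bell_log_derive n x : D x -> g x <> 0 ->
  bell n (fun j => Derive_n f (j - 1) x) = Derive_n g n x / g x.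
Proof.
move=> Dx gx_neq0; elim/ltn_ind: n => -[|n] IH.
  by rewrite /bell /=; field.
rewrite bell_rec Derive_n_succ_log_derive // /Rdiv [RHS]Rmult_comm scal_sum.
apply: PartSum.sum_eq => i le_in.
rewrite IH ?subn1 /=; last by rewrite ltnS leq_subr.
by field.
Qed.

End LogarithmicDerivative.

Definition sinpi (x : R) := sin (x * PI).

Lemma sinpi_neq0_locally x : sinpi x <> 0 -> locally x (fun y => sinpi y <> 0).
Proof.
move=> sx_neq0.
have cont : continuity_pt sinpi x.
  apply/continuity_pt_filterlim/(ex_derive_continuous (V := R_NormedModule)).
  by rewrite /sinpi; auto_derive.
have [e He] := continuous_neq_0 _ _ cont sx_neq0.
exists e => y /= Hy; rewrite -[y](Rplus_minus x); exact: He.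
Qed.

Lemma sinpi_neq0 x : (forall z : Z, x <> IZR z) -> sinpi x <> 0.
Proof.
move=> x_nonint /sin_eq_0_0 [z Hz]; apply: (x_nonint z).
by apply: (Rmult_eq_reg_r PI) => //; have := PI_RGT_0; lra.
Qed.

Inductive cot_poly : (R -> R) -> Prop :=
  | cot_poly_const c : cot_poly (fun _ => c)
  | cot_poly_cot : cot_poly (fun x => cos (x * PI) / sin (x * PI))
  | cot_poly_plus p q : cot_poly p -> cot_poly q -> cot_poly (fun x => p x + q x)
  | cot_poly_mult p q : cot_poly p -> cot_poly q -> cot_poly (fun x => p x * q x).

(* [cot' = - PI (1 + cot^2)] keeps derivatives inside the class. *)
Lemma cot_poly_derive p : cot_poly p ->
  exists2 q, cot_poly q & forall x, sinpi x <> 0 -> is_derive p x (q x).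
Proof.
elim=> [c | | f g _ [f' Pf' Df] _ [g' Pg' Dg] | f g Pf [f' Pf' Df] Pg [g' Pg' Dg]].
- by exists (fun _ => 0) => [|x _]; [exact: cot_poly_const | exact: is_derive_const].
- exists (fun x => - PI * (1 + cos (x * PI) / sin (x * PI) * (cos (x * PI) / sin (x * PI)))).
    by do !constructor.
  by move=> x sx_neq0; auto_derive => //; field.
- exists (fun x => f' x + g' x) => [|x sx]; first exact: cot_poly_plus.
  exact: is_derive_plus (Df x sx) (Dg x sx).
- exists (fun x => f' x * g x + f x * g' x) => [|x sx].
    by apply: cot_poly_plus; apply: cot_poly_mult.
  by apply: is_derive_mult => [||*]; [exact: Df | exact: Dg | exact: Rmult_comm].
Qed.

Lemma Derive_n_pcot_cot_poly i :
  exists2 p, cot_poly p & forall x, sinpi x <> 0 -> Derive_n pcot i x = p x.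
Proof.
elim: i => [|i [p Pp Ep]].
  by exists pcot => //; apply: cot_poly_mult; constructor.
have [q Pq Dq] := cot_poly_derive _ Pp.
exists q => // x sx /=.
rewrite (Derive_ext_loc _ p); first exact: is_derive_unique (Dq x sx).
by move: (sinpi_neq0_locally _ sx); apply: filter_imp.
Qed.

Lemma is_derive_Derive_n_pcot i x : sinpi x <> 0 ->
  is_derive (Derive_n pcot i) x (Derive_n pcot i.+1 x).
Proof.
move=> sx; have [p Pp Ep] := Derive_n_pcot_cot_poly i.
have [q _ Dq] := cot_poly_derive _ Pp.
have Dx : is_derive (Derive_n pcot i) x (q x).
  apply: (is_derive_ext_loc p); last exact: Dq.
  by move: (sinpi_neq0_locally _ sx); apply: filter_imp => y /Ep.
by rewrite /= (is_derive_unique _ _ _ Dx).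
Qed.

Lemma Derive_n_sinpi n x :
  Derive_n sinpi n x = PI ^ n * sin (x * PI + INR n * (PI / 2)).
Proof.
elim: n x => [|n IH] x; first by rewrite /= /sinpi Rmult_0_l Rplus_0_r Rmult_1_l.
rewrite [LHS]/= (Derive_ext _ _ _ IH); apply: is_derive_unique; auto_derive => //.
rewrite S_INR Rmult_plus_distr_r !Rmult_1_l -Rplus_assoc sin_plus sin_PI2 cos_PI2 /=; ring.
Qed.

Lemma is_derive_Derive_n_sinpi i x :
  is_derive (Derive_n sinpi i) x (Derive_n sinpi i.+1 x).
Proof.
apply/Derive_correct/(ex_derive_ext _ _ _ (fun y => esym (Derive_n_sinpi i y))).
by auto_derive.
Qed.

Lemma is_derive_sinpi x : sinpi x <> 0 -> is_derive sinpi x (pcot x * sinpi x).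
Proof. by move=> sx; rewrite /sinpi /pcot; auto_derive => //; field. Qed.

Lemma sin_plus_nat_PI j y : sin (y + INR j * PI) = (-1) ^ j * sin y.
Proof.
elim: j => [|j IH]; first by rewrite /= Rmult_0_l Rplus_0_r Rmult_1_l.
rewrite S_INR Rmult_plus_distr_r Rmult_1_l -Rplus_assoc neg_sin IH /=; ring.
Qed.

Lemma cos_plus_nat_PI j y : cos (y + INR j * PI) = (-1) ^ j * cos y.
Proof.
elim: j => [|j IH]; first by rewrite /= Rmult_0_l Rplus_0_r Rmult_1_l.
rewrite S_INR Rmult_plus_distr_r Rmult_1_l -Rplus_assoc neg_cos IH /=; ring.
Qed.

Theorem lemma2 (k : R) (hk : forall z : Z, k <> IZR z) :
  let nu := fun j : nat => Derive_n pcot (j - 1)%nat k in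
  forall j : nat,
    bell (2 * j) nu = (-1) ^ j * PI ^ (2 * j) /\
    bell (2 * j + 1) nu = (-1) ^ j * PI ^ (2 * j + 1) * (cos (k * PI) / sin (k * PI)).
Proof.
have sk := sinpi_neq0 _ hk.
have bell_nu n : bell n (fun j => Derive_n pcot (j - 1) k) = Derive_n sinpi n k / sinpi k.
  apply: (bell_log_derive (fun x => sinpi x <> 0)) => // [|i x sx|i x _|x].
  - exact: sinpi_neq0_locally.
  - exact: is_derive_Derive_n_pcot.
  - exact: is_derive_Derive_n_sinpi.
  - exact: is_derive_sinpi.
move=> nu j; rewrite /nu !bell_nu !Derive_n_sinpi /sinpi.
have -> : INR (2 * j) * (PI / 2) = INR j * PI by rewrite mult_INR /=; field.
have -> : INR (2 * j + 1) * (PI / 2) = INR j * PI + PI / 2.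
  by rewrite plus_INR mult_INR /=; field.
rewrite -Rplus_assoc (sin_plus _ (PI / 2)) sin_PI2 cos_PI2.
rewrite sin_plus_nat_PI cos_plus_nat_PI.
by split; field.
Qed.
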